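(* For every $M\in\Lambda^{001}$ the following are equivalent: (1) there exists $N\in\Lambda^{001}$ in β-normal form (containing no β-redex) such that $M\longrightarrow_\beta^\infty N$; (2) for every $d\in\mathbf N$ there exists $s\in\mathcal T(M)$ such that $\mathrm{nf}_r(s)$ contains a $d$-positive resource term.
   Context: $\Lambda^{001}$: possibly infinite λ-terms (trees of variables, abstractions and applications $(M)N$) whose infinite branches all enter infinitely often the argument position $N$ of an application, up to α-equivalence. $\longrightarrow_\beta^*$ is the reflexive-transitive closure of one-step β-reduction (contextual closure of $(\lambda x.M)N\to M[N/x]$); $\longrightarrow_\beta^\infty$ is defined by the rules (var) $M\longrightarrow_\beta^* x\Rightarrow M\longrightarrow_\beta^\infty x$, (λ) $M\longrightarrow_\beta^*\lambda x.P$, $P\longrightarrow_\beta^\infty P'\Rightarrow M\longrightarrow_\beta^\infty\lambda x.P'$, (@) $M\longrightarrow_\beta^*(P)Q$, $P\longrightarrow_\beta^\infty P'$, $Q\longrightarrow_\beta^\infty Q'\Rightarrow M\longrightarrow_\beta^\infty(P')Q'$, with possibly infinite derivations in which every infinite branch crosses infinitely often the third premise of (@). Resource terms: $s::=x\mid\lambda x.s\mid\langle s\rangle\bar t$, $\bar t$ a finite multiset of resource terms ($1$ the empty multiset); finite sums are finite sets of resource terms. Resource reduction $\longmapsto_r$ is generated by $\langle\lambda x.s\rangle\bar t\longmapsto_r s\langle\bar t/x\rangle$ (for $\bar t=[t_1,\dots,t_n]$: sum over $\sigma\in\mathfrak S_n$ of the linear substitutions of $t_{\sigma(i)}$ for the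 $i$-th free occurrence of $x$ when $x$ has exactly $n$ free occurrences in $s$, and the empty sum $0$ otherwise) and closed under all contexts; on finite sums, $\sum_{i=0}^n s_i\longrightarrow_r\sum_{i=0}^n T_i$ when $s_0\longmapsto_r T_0$ and each other $s_i$ either reduces to $T_i$ or equals it. This reduction is confluent and weakly normalising; $\mathrm{nf}_r(s)$ denotes the normal form (finite set) of $s$. Taylor approximation $\ltimes$ is inductive: $x\ltimes x$; $s\ltimes M\Rightarrow\lambda x.s\ltimes\lambda x.M$; ($s\ltimes M$ and $t_i\ltimes N$ for all $i$) $\Rightarrow\langle s\rangle[t_1,\dots,t_n]\ltimes(M)N$; $\mathcal T(M)=\{s : s\ltimes M\}$. $d$-positive resource terms: every resource term is 0-positive; for $d\ge1$, the $d$-positive terms are generated by $s::=x\mid\lambda x.s\mid\langle s\rangle\bar t$ where $s$ is $d$-positive and $\bar t$ is a non-empty multiset of $(d-1)$-positive terms. *)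

(* Terms are represented with de Bruijn indices, so that
   alpha-equivalence classes are exactly the (possibly infinite) trees. *)
From Stdlib Require Import Arith List Permutation Relations.
Import ListNotations.

CoInductive term : Type :=
| Var : nat -> term
| Lam : term -> term
| App : term -> term -> term.   (* App M N = (M)N, N in argument position *)

CoInductive bisim : term -> term -> Prop :=
| bisim_var n : bisim (Var n) (Var n)
| bisim_lam t t' : bisim t t' -> bisim (Lam t) (Lam t')
| bisim_app t u t' u' : bisim t t' -> bisim u u' -> bisim (App t u) (App t' u').

(* Finite layer of the 001 condition: along function/body positions the
   tree is finite; argument positions are handed over to P. *)
Inductive layer001 (P : term -> Prop) : term -> Prop :=
| l001_var n : layer001 P (Var n)
| l001_lam t : layer001 P t -> layer001 P (Lam t)
| l001_app t u : layer001 P t -> P u -> layer001 P (App t u).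

(* Lambda^{001}: greatest fixed point, i.e. every infinite branch enters
   the argument position of an application infinitely often. *)
Definition wf001 (M : term) : Prop :=
  exists P : term -> Prop, (forall t, P t -> layer001 P t) /\ P M.

CoFixpoint lift (c d : nat) (t : term) : term :=
  match t with
  | Var n => Var (if n <? c then n else n + d)
  | Lam t1 => Lam (lift (S c) d t1)
  | App t1 t2 => App (lift c d t1) (lift c d t2)
  end.

CoFixpoint subst (k : nat) (t u : term) : term :=
  match t with
  | Var n => if n <? k then Var n
             else if n =? k then lift 0 k u
             else Var (n - 1)
  | Lam t1 => Lam (subst (S k) t1 u)
  | App t1 t2 => App (subst k t1 u) (subst k t2 u)
  end.

Inductive beta_step : term -> term -> Prop :=
| bs_beta t u v : bisim v (subst 0 t u) -> beta_step (App (Lam t) u) v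
| bs_lam t t' : beta_step t t' -> beta_step (Lam t) (Lam t')
| bs_appl t t' u : beta_step t t' -> beta_step (App t u) (App t' u)
| bs_appr t u u' : beta_step u u' -> beta_step (App t u) (App t u').

Definition beta_star (M N : term) : Prop :=
  exists N', clos_refl_trans term beta_step M N' /\ bisim N' N.

(* Finite layer of an infinitary derivation: R is used only for the third
   premise of rule (@). *)
Inductive inf_layer (R : term -> term -> Prop) : term -> term -> Prop :=
| il_var M x : beta_star M (Var x) -> inf_layer R M (Var x)
| il_lam M P P' : beta_star M (Lam P) -> inf_layer R P P' ->
    inf_layer R M (Lam P')
| il_app M P Q P' Q' : beta_star M (App P Q) -> inf_layer R P P' -> R Q Q' ->
    inf_layer R M (App P' Q').

(* M -->^infty_beta N : possibly infinite derivations in which every infinite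
   branch crosses infinitely often the third premise of (@). *)
Definition beta_inf (M N : term) : Prop :=
  exists R : term -> term -> Prop,
    (forall a b, R a b -> inf_layer R a b) /\ R M N.

Inductive has_redex : term -> Prop :=
| hr_root t u : has_redex (App (Lam t) u)
| hr_lam t : has_redex t -> has_redex (Lam t)
| hr_appl t u : has_redex t -> has_redex (App t u)
| hr_appr t u : has_redex u -> has_redex (App t u).

Definition beta_normal (M : term) : Prop := ~ has_redex M.

(* Multisets are lists; everything below is invariant under permutation
   of bags. *)
Inductive rterm : Type :=
| RVar : nat -> rterm
| RLam : rterm -> rterm
| RApp : rterm -> list rterm -> rterm.

Fixpoint rlift (c d : nat) (s : rterm) : rterm :=
  match s with
  | RVar n => RVar (if n <? c then n else n + d)
  | RLam s1 => RLam (rlift (S c) d s1)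
  | RApp s1 b => RApp (rlift c d s1) (map (rlift c d) b)
  end.

(* lsub k s ts s' : s' is obtained from s by replacing the free occurrences
   of variable k by the elements of the multiset ts, each used exactly once
   (all possible distributions, i.e. all permutations sigma), other
   variables above k being decremented.  No s' exists if the number of
   occurrences differs from the size of ts. *)
Inductive lsub : nat -> rterm -> list rterm -> rterm -> Prop :=
| ls_hit k t : lsub k (RVar k) [t] (rlift 0 k t)
| ls_lt k n : n < k -> lsub k (RVar n) [] (RVar n)
| ls_gt k n : k < n -> lsub k (RVar n) [] (RVar (n - 1))
| ls_lam k s ts s' : lsub (S k) s ts s' -> lsub k (RLam s) ts (RLam s')
| ls_app k s b ts ts1 ts2 s' b' :
    Permutation ts (ts1 ++ ts2) -> lsub k s ts1 s' -> lsub_bag k b ts2 b' ->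
    lsub k (RApp s b) ts (RApp s' b')
with lsub_bag : nat -> list rterm -> list rterm -> list rterm -> Prop :=
| lb_nil k : lsub_bag k [] [] []
| lb_cons k u b ts ts1 ts2 u' b' :
    Permutation ts (ts1 ++ ts2) -> lsub k u ts1 u' -> lsub_bag k b ts2 b' ->
    lsub_bag k (u :: b) ts (u' :: b').

(* One-step resource reduction s |->_r T, T a finite sum (list). *)
Inductive rstep : rterm -> list rterm -> Prop :=
| rs_beta s b T : (forall u, In u T <-> lsub 0 s b u) ->
    rstep (RApp (RLam s) b) T
| rs_lam s T : rstep s T -> rstep (RLam s) (map RLam T)
| rs_appl s b T : rstep s T -> rstep (RApp s b) (map (fun s' => RApp s' b) T)
| rs_appr s b1 t b2 T : rstep t T ->
    rstep (RApp s (b1 ++ t :: b2)) (map (fun t' => RApp s (b1 ++ t' :: b2)) T).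

(* Reduction of finite sums: at least one summand reduces, the others
   reduce or stay. *)
Inductive sum_step_aux : list rterm -> list rterm -> bool -> Prop :=
| ssa_nil : sum_step_aux [] [] false
| ssa_keep s S T b : sum_step_aux S T b -> sum_step_aux (s :: S) (s :: T) b
| ssa_red s U S T b : rstep s U -> sum_step_aux S T b ->
    sum_step_aux (s :: S) (U ++ T) true.

Definition sum_step (S T : list rterm) : Prop := sum_step_aux S T true.

Inductive rhas_redex : rterm -> Prop :=
| rr_root s b : rhas_redex (RApp (RLam s) b)
| rr_lam s : rhas_redex s -> rhas_redex (RLam s)
| rr_appl s b : rhas_redex s -> rhas_redex (RApp s b)
| rr_appr s t b : In t b -> rhas_redex t -> rhas_redex (RApp s b).

Definition sum_normal (T : list rterm) : Prop :=
  forall t, In t T -> ~ rhas_redex t.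

(* is_nf_r s T : T is the normal form nf_r(s) of s (unique as a set, by
   confluence and weak normalisation). *)
Definition is_nf_r (s : rterm) (T : list rterm) : Prop :=
  clos_refl_trans (list rterm) sum_step [s] T /\ sum_normal T.

Inductive taylor : rterm -> term -> Prop :=
| ty_var n : taylor (RVar n) (Var n)
| ty_lam s M : taylor s M -> taylor (RLam s) (Lam M)
| ty_app s b M N : taylor s M -> (forall t, In t b -> taylor t N) ->
    taylor (RApp s b) (App M N).

Inductive dpos : nat -> rterm -> Prop :=
| dp_zero s : dpos 0 s
| dp_var d n : dpos (S d) (RVar n)
| dp_lam d s : dpos (S d) s -> dpos (S d) (RLam s)
| dp_app d s b : dpos (S d) s -> b <> [] -> (forall t, In t b -> dpos d t) ->
    dpos (S d) (RApp s b).

(* (1) => (2): a d-positive approximant t of the normal term N is normal. An approximant of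
   the target of a beta step is pulled back to an approximant of its source that
   resource-reduces to it (Taylor expansion commutes with substitution), and t, being
   finite, meets only finitely many layers of the derivation M ->>oo N. Hence some
   s in T(M) reduces to t, and then t belongs to nf_r(s).

   (2) => (1): if an approximant of M reduces to a normal term, firing its head redex
   first shows that M head-reduces to a head normal form \x1..xn. z Q1 .. Qk. A normal
   (d+1)-positive reduct of an approximant gives, for each Qi, a normal d-positive reduct
   of an approximant of Qi. Taking head normal forms corecursively thus builds the Böhm
   tree of M: it is normal, lies in Lambda^001, and M reduces infinitarily to it. *)

From Stdlib Require Import Arith List Permutation Relations Lia Classical ClassicalEpsilon.
Import ListNotations.

Ltac ltb_facts :=
  repeat match goal with
  | H : (_ <? _) = true |- _ => apply Nat.ltb_lt in H
  | H : (_ <? _) = false |- _ => apply Nat.ltb_ge in H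
  end.

Ltac destruct_ltb :=
  repeat match goal with |- context [?a <? ?b] => destruct (a <? b) eqn:? end;
  ltb_facts.

(** * Resource terms *)

Fixpoint rterm_ind' (P : rterm -> Prop) (Hv : forall n, P (RVar n))
  (Hl : forall s, P s -> P (RLam s))
  (Ha : forall s b, P s -> Forall P b -> P (RApp s b)) (s : rterm) : P s :=
  match s with
  | RVar n => Hv n
  | RLam s1 => Hl s1 (rterm_ind' P Hv Hl Ha s1)
  | RApp s1 b => Ha s1 b (rterm_ind' P Hv Hl Ha s1)
      ((fix F (l : list rterm) : Forall P l :=
         match l with
         | [] => Forall_nil _
         | x :: l' => Forall_cons x (rterm_ind' P Hv Hl Ha x) (F l')
         end) b)
  end.

Fixpoint rsize (s : rterm) : nat :=
  match s with
  | RVar _ => 1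
  | RLam s1 => S (rsize s1)
  | RApp s1 b => S (rsize s1 + list_sum (map rsize b))
  end.

Definition bsize (b : list rterm) : nat := list_sum (map rsize b).

Lemma bsize_app a b : bsize (a ++ b) = bsize a + bsize b.
Proof. unfold bsize. now rewrite map_app, list_sum_app. Qed.

Lemma bsize_perm a b : Permutation a b -> bsize a = bsize b.
Proof. induction 1; unfold bsize in *; simpl; lia. Qed.

Lemma rsize_le_bsize x b : In x b -> rsize x <= bsize b.
Proof.
  induction b as [|y b IH]; simpl; [easy|]. unfold bsize in *; simpl.
  intros [<-|Hx]; [lia|]. specialize (IH Hx). lia.
Qed.

Lemma rsize_rlift s : forall c d, rsize (rlift c d s) = rsize s.
Proof.
  induction s as [n|s IHs|s b IHs IHb] using rterm_ind'; intros; simpl.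
  - reflexivity.
  - now rewrite IHs.
  - rewrite IHs, map_map. do 3 f_equal. apply map_ext_Forall.
    eapply Forall_impl; [|exact IHb]. intros x Hx. apply Hx.
Qed.

Lemma rlift_comm t : forall c' k c d,
  rlift (c' + k + c) d (rlift c' k t) = rlift c' k (rlift (c' + c) d t).
Proof.
  induction t as [n|t IHt|t b IHt IHb] using rterm_ind'; intros; simpl.
  - f_equal. destruct_ltb; destruct_ltb; lia.
  - f_equal. exact (IHt (S c') k c d).
  - f_equal; auto. rewrite !map_map. apply map_ext_Forall.
    eapply Forall_impl; [|exact IHb]. intros x Hx. apply Hx.
Qed.

Lemma rlift_rlift t : forall c' c j m, c <= m ->
  rlift (c' + c) j (rlift c' m t) = rlift c' (m + j) t.
Proof.
  induction t as [n|t IHt|t b IHt IHb] using rterm_ind'; intros; simpl.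
  - f_equal. destruct_ltb; lia.
  - f_equal. exact (IHt (S c') c j m H).
  - f_equal; auto. rewrite !map_map. apply map_ext_Forall.
    eapply Forall_impl; [|exact IHb]. intros x Hx. now apply Hx.
Qed.

(** * Linear substitution *)

Scheme lsub_mut := Induction for lsub Sort Prop
  with lsub_bag_mut := Induction for lsub_bag Sort Prop.
Combined Scheme lsub_lsub_bag_ind from lsub_mut, lsub_bag_mut.

Lemma lsub_lsub_bag_perm :
  (forall k s ts u, lsub k s ts u -> forall ts', Permutation ts ts' -> lsub k s ts' u) /\
  (forall k b ts b', lsub_bag k b ts b' ->
     forall ts', Permutation ts ts' -> lsub_bag k b ts' b').
Proof.
  apply lsub_lsub_bag_ind; intros.
  - apply Permutation_length_1_inv in H. subst. constructor.
  - apply Permutation_nil in H. subst. now constructor.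
  - apply Permutation_nil in H. subst. now constructor.
  - constructor. auto.
  - eapply ls_app; eauto. eapply Permutation_trans; [symmetry|]; eauto.
  - apply Permutation_nil in H. subst. constructor.
  - eapply lb_cons; eauto. eapply Permutation_trans; [symmetry|]; eauto.
Qed.

Lemma lsub_perm k s ts ts' u : lsub k s ts u -> Permutation ts ts' -> lsub k s ts' u.
Proof. intros; eapply (proj1 lsub_lsub_bag_perm); eauto. Qed.

Lemma lsub_bag_perm k b ts ts' b' :
  lsub_bag k b ts b' -> Permutation ts ts' -> lsub_bag k b ts' b'.
Proof. intros; eapply (proj2 lsub_lsub_bag_perm); eauto. Qed.

Lemma lsub_lsub_bag_size :
  (forall k s ts u, lsub k s ts u -> rsize u + length ts = rsize s + bsize ts) /\
  (forall k b ts b', lsub_bag k b ts b' -> bsize b' + length ts = bsize b + bsize ts).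
Proof.
  apply lsub_lsub_bag_ind; intros; simpl; unfold bsize in *; simpl in *;
    try rewrite rsize_rlift; try lia;
    apply Permutation_length in p as Hl; apply bsize_perm in p; unfold bsize in p;
    rewrite map_app, list_sum_app in p; rewrite length_app in Hl; lia.
Qed.

Lemma lsub_bag_app k b1 ts1 b1' b2 ts2 b2' :
  lsub_bag k b1 ts1 b1' -> lsub_bag k b2 ts2 b2' ->
  lsub_bag k (b1 ++ b2) (ts1 ++ ts2) (b1' ++ b2').
Proof.
  induction 1 as [|k u b ts ts1' ts2' u' b' P Hu Hb IH]; intros H2; simpl; auto.
  apply lb_cons with ts1' (ts2' ++ ts2); auto.
  rewrite app_assoc. now apply Permutation_app_tail.
Qed.

Lemma lsub_bag_app_inv k b1 : forall b2 ts r, lsub_bag k (b1 ++ b2) ts r ->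
  exists ts1 ts2 r1 r2, Permutation ts (ts1 ++ ts2) /\ lsub_bag k b1 ts1 r1 /\
    lsub_bag k b2 ts2 r2 /\ r = r1 ++ r2.
Proof.
  induction b1 as [|u b1 IH]; simpl; intros b2 ts r H.
  - exists [], ts, [], r. repeat split; auto. constructor.
  - inversion H as [|? ? ? ? ts1 ts2 u' r' Pm Hu Hb]; subst.
    destruct (IH _ _ _ Hb) as (t1 & t2 & r1 & r2 & P & B1 & B2 & ->).
    exists (ts1 ++ t1), t2, (u' :: r1), r2. repeat split; auto.
    + rewrite <- app_assoc. eapply Permutation_trans; eauto. now apply Permutation_app_head.
    + econstructor; eauto.
Qed.

Lemma lsub_bag_perm_in k b b' : Permutation b b' -> forall ts r', lsub_bag k b' ts r' ->
  exists r, Permutation r r' /\ lsub_bag k b ts r.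
Proof.
  induction 1 as [|u b b' _ IH|u v b|b b' b'' _ IH1 _ IH2]; intros ts r' H.
  - inversion H; subst. exists []. split; auto.
  - inversion H as [|? ? ? ? ts1 ts2 u' r Pm Hu Hb]; subst.
    destruct (IH _ _ Hb) as (r0 & P & B).
    exists (u' :: r0). split; auto. econstructor; eauto.
  - inversion H as [|? ? ? ? ? ? u' ? ? ? Hb]; subst.
    inversion Hb as [|? ? ? ? ? ? v' b0']; subst.
    exists (v' :: u' :: b0'). split; [constructor|].
    econstructor; [|eauto|econstructor; [apply Permutation_refl|eauto|eauto]].
    eapply Permutation_trans; [eauto|]. eapply Permutation_trans.
    + apply Permutation_app_head; eauto.
    + apply Permutation_app_swap_app.
  - destruct (IH2 _ _ H) as (r1 & P1 & B1). destruct (IH1 _ _ B1) as (r0 & P0 & B0).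
    exists r0. split; auto. eapply Permutation_trans; eauto.
Qed.

Lemma lsub_lsub_bag_lift :
  (forall k p b u, lsub k p b u -> forall c d,
     lsub k (rlift (S c + k) d p) (map (rlift c d) b) (rlift (c + k) d u)) /\
  (forall k l b r, lsub_bag k l b r -> forall c d,
     lsub_bag k (map (rlift (S c + k) d) l) (map (rlift c d) b) (map (rlift (c + k) d) r)).
Proof.
  apply lsub_lsub_bag_ind; intros; simpl.
  - replace (k <? S (c + k)) with true by (symmetry; apply Nat.ltb_lt; lia).
    pose proof (rlift_comm t 0 k c d) as E. simpl in E. rewrite Nat.add_comm, E. constructor.
  - destruct_ltb; try lia. now constructor.
  - destruct_ltb; try lia.
    + now constructor.
    + replace (n - 1 + d) with (n + d - 1) by lia. apply ls_gt. lia.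
  - constructor. specialize (H c d). simpl in H. now rewrite !Nat.add_succ_r in H.
  - econstructor; eauto. rewrite <- map_app. now apply Permutation_map.
  - constructor.
  - econstructor; eauto. rewrite <- map_app. now apply Permutation_map.
Qed.

(** Substituting nothing for a variable that does not occur. *)
Lemma lsub_nil_rlift x : forall c j m, j <= m ->
  lsub (c + j) (rlift c (S m) x) [] (rlift c m x).
Proof.
  induction x as [n|x IHx|x b IHx IHb] using rterm_ind'; intros; simpl.
  - destruct_ltb.
    + constructor. lia.
    + replace (n + m) with (n + S m - 1) by lia. constructor. lia.
  - constructor. apply (IHx (S c)). auto.
  - apply ls_app with [] []; auto.
    induction IHb; simpl; [constructor|].
    apply lb_cons with [] []; auto.
Qed.

Lemma lsub_rlift_inv x : forall c j k b u, lsub (c + j + k) (rlift c j x) b u ->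
  exists x', lsub (c + k) x b x' /\ u = rlift c j x'.
Proof.
  induction x as [n|x IHx|x l IHx IHl] using rterm_ind'; intros c j k b u H; simpl in *.
  - destruct (n <? c) eqn:E; ltb_facts; inversion H; subst; try lia.
    + exists (RVar n). split; [constructor; lia|]. simpl. now destruct_ltb; try lia.
    + exists (rlift 0 (c + k) t). split; [replace n with (c + k) by lia; constructor|].
      pose proof (rlift_rlift t 0 c j (c + k)) as R. simpl in R.
      rewrite R by lia. f_equal. lia.
    + exists (RVar n). split; [constructor; lia|]. simpl. now destruct_ltb; try lia.
    + exists (RVar (n - 1)). split; [constructor; lia|]. simpl.
      destruct_ltb; try lia. f_equal. lia.
  - inversion H as [| | |? ? ? s' Hs|]; subst.
    destruct (IHx (S c) j k b s' Hs) as (x' & Hx & ->).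
    exists (RLam x'). split; auto. now constructor.
  - inversion H as [| | | |? ? ? ? ts1 ts2 s' r Pm Hs Hr]; subst.
    destruct (IHx _ _ _ _ _ Hs) as (x' & Hx & ->).
    assert (Hl : exists l', lsub_bag (c + k) l ts2 l' /\ r = map (rlift c j) l').
    { clear - IHl Hr. revert ts2 r Hr. induction IHl as [|y l Hy _ IH]; intros ts r Hr.
      - inversion Hr; subst. exists []. split; auto. constructor.
      - inversion Hr as [|? ? ? ? ts1 ts2 y' r' Pm Hy' Hr']; subst.
        destruct (Hy _ _ _ _ _ Hy') as (y0 & Hy0 & ->).
        destruct (IH _ _ Hr') as (l' & Hl' & ->).
        exists (y0 :: l'). split; auto. econstructor; eauto. }
    destruct Hl as (l' & Hl & ->).
    exists (RApp x' l'). split; auto. econstructor; eauto.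
Qed.

Lemma perm_interleave {A} (b b1 b2 a1 a2 c1 c2 : list A) :
  Permutation b (b1 ++ b2) -> Permutation b1 (a1 ++ a2) -> Permutation b2 (c1 ++ c2) ->
  Permutation b ((a1 ++ c1) ++ (a2 ++ c2)).
Proof.
  intros P P1 P2. rewrite P, P1, P2, <- !app_assoc. apply Permutation_app_head.
  apply Permutation_app_swap_app.
Qed.

Lemma lsub_bag_app_perm k ts ts1 ts2 c1 c2 e1 e2 : Permutation ts (ts1 ++ ts2) ->
  lsub_bag k ts1 c1 e1 -> lsub_bag k ts2 c2 e2 ->
  exists e, Permutation e (e1 ++ e2) /\ lsub_bag k ts (c1 ++ c2) e.
Proof. intros P H1 H2. eapply lsub_bag_perm_in; [exact P|]. now apply lsub_bag_app. Qed.

Lemma lsub_lsub_bag_comm :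
  (forall j q e p, lsub j q e p -> forall k b u, lsub (j + k) p b u ->
     exists b1 b2 q' e', Permutation b (b1 ++ b2) /\ lsub (S (j + k)) q b1 q' /\
       lsub_bag k e b2 e' /\ lsub j q' e' u) /\
  (forall j c e c', lsub_bag j c e c' -> forall k b cc, lsub_bag (j + k) c' b cc ->
     exists b1 b2 c0 e', Permutation b (b1 ++ b2) /\ lsub_bag (S (j + k)) c b1 c0 /\
       lsub_bag k e b2 e' /\ lsub_bag j c0 e' cc).
Proof.
  apply lsub_lsub_bag_ind.
  - intros j t k b u H.
    destruct (lsub_rlift_inv t 0 j k b u H) as (x' & Hx & ->).
    exists [], b, (RVar j), [x']. repeat split; auto.
    + constructor. lia.
    + apply lb_cons with b []; [now rewrite app_nil_r|auto|constructor].
    + constructor.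
  - intros j n Hn k b u H. inversion H; subst; try lia.
    exists [], [], (RVar n), []. repeat split; auto; constructor; lia.
  - intros j n Hn k b u H. inversion H; subst.
    + exists [t], [], (rlift 0 (S (j + k)) t), []. repeat split; auto.
      * replace n with (S (j + k)) by lia. constructor.
      * constructor.
      * apply (lsub_nil_rlift t 0 j (j + k)). lia.
    + exists [], [], (RVar n), []. repeat split; auto; constructor; lia.
    + exists [], [], (RVar (n - 1)), []. repeat split; auto; constructor; lia.
  - intros j s ts s' _ IH k b u H.
    inversion H as [| | |? ? ? u' Hu|]; subst.
    destruct (IH k _ _ Hu) as (b1 & b2 & q' & e' & P & A & B & C).
    exists b1, b2, (RLam q'), e'. repeat split; auto; now constructor.
  - intros j s c ts ts1 ts2 s' c' Pe _ IHs _ IHc k b u H.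
    inversion H as [| | | |? ? ? ? bA bB s'' c'' Pb HA HB]; subst.
    destruct (IHs _ _ _ HA) as (ba1 & ba2 & q0 & e1 & Pa & Aa & Ba & Ca).
    destruct (IHc _ _ _ HB) as (bb1 & bb2 & c0 & e2 & Pc & Ac & Bc & Cc).
    destruct (lsub_bag_app_perm _ _ _ _ _ _ _ _ Pe Ba Bc) as (e' & Pe' & Be).
    exists (ba1 ++ bb1), (ba2 ++ bb2), (RApp q0 c0), e'. repeat split; auto.
    + eapply perm_interleave; eauto.
    + econstructor; eauto.
    + econstructor; [exact Pe'|eauto|eauto].
  - intros j k b u H. inversion H; subst.
    exists [], [], [], []. repeat split; auto; constructor.
  - intros j x c ts ts1 ts2 x' c' Pe _ IHx _ IHc k b u H.
    inversion H as [|? ? ? ? bA bB x'' c'' Pb HA HB]; subst.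
    destruct (IHx _ _ _ HA) as (ba1 & ba2 & q0 & e1 & Pa & Aa & Ba & Ca).
    destruct (IHc _ _ _ HB) as (bb1 & bb2 & c0 & e2 & Pc & Ac & Bc & Cc).
    destruct (lsub_bag_app_perm _ _ _ _ _ _ _ _ Pe Ba Bc) as (e' & Pe' & Be).
    exists (ba1 ++ bb1), (ba2 ++ bb2), (q0 :: c0), e'. repeat split; auto.
    + eapply perm_interleave; eauto.
    + econstructor; eauto.
    + econstructor; [exact Pe'|eauto|eauto].
Qed.

Definition enumerable {A} (P : A -> Prop) : Prop := exists L, forall x, In x L <-> P x.

Lemma enumerable_union {A B} (Q : A -> B -> Prop) (l : list A) :
  (forall x, In x l -> enumerable (Q x)) ->
  enumerable (fun u => exists x, In x l /\ Q x u).
Proof.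
  induction l as [|a l IH]; intros H.
  - exists []. simpl. firstorder.
  - destruct (H a (or_introl eq_refl)) as [La HLa].
    destruct IH as [L HL]; [intros; apply H; now right|].
    exists (La ++ L). intros u. rewrite in_app_iff, HLa, HL. simpl. firstorder congruence.
Qed.

Lemma enumerable_image2 {A B C} (P : A -> Prop) (Q : B -> Prop) (f : A -> B -> C) :
  enumerable P -> enumerable Q -> enumerable (fun u => exists x y, P x /\ Q y /\ u = f x y).
Proof.
  intros [L1 H1] [L2 H2].
  exists (flat_map (fun x => map (f x) L2) L1). intros u.
  rewrite in_flat_map. split.
  - intros (x & Hx & Hu). apply in_map_iff in Hu. destruct Hu as (y & <- & Hy).
    exists x, y. rewrite <- H1, <- H2. auto.
  - intros (x & y & Hx & Hy & ->). exists x. rewrite H1. split; auto.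
    apply in_map, H2, Hy.
Qed.

Fixpoint splits (l : list rterm) : list (list rterm * list rterm) :=
  match l with
  | [] => [([], [])]
  | x :: l' => flat_map (fun p => [(x :: fst p, snd p); (fst p, x :: snd p)]) (splits l')
  end.

Lemma splits_perm l : forall a c, In (a, c) (splits l) -> Permutation l (a ++ c).
Proof.
  induction l as [|x l IH]; simpl; intros a c H.
  - destruct H as [[= <- <-]|[]]. constructor.
  - apply in_flat_map in H. destruct H as ([a' c'] & Hin & H). simpl in H.
    destruct H as [[= <- <-]|[[= <- <-]|[]]]; simpl.
    + constructor. auto.
    + apply Permutation_cons_app. auto.
Qed.

Lemma perm_splits l : forall t1 t2, Permutation l (t1 ++ t2) ->
  exists a c, In (a, c) (splits l) /\ Permutation a t1 /\ Permutation c t2.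
Proof.
  induction l as [|x l IH]; simpl; intros t1 t2 H.
  - apply Permutation_nil, app_eq_nil in H as [-> ->]. exists [], []. auto.
  - assert (Hx : In x (t1 ++ t2)) by (eapply Permutation_in; [exact H|now left]).
    apply in_app_or in Hx as [Hx|Hx]; apply in_split in Hx as (u1 & v1 & ->).
    + rewrite <- app_assoc in H. simpl in H.
      apply Permutation_cons_app_inv in H. rewrite app_assoc in H.
      destruct (IH _ _ H) as (a' & c' & Hin & P1 & P2).
      exists (x :: a'), c'. repeat split; auto.
      * apply in_flat_map. exists (a', c'). simpl. auto.
      * now apply Permutation_cons_app.
    + rewrite app_assoc in H.
      apply Permutation_cons_app_inv in H. rewrite <- app_assoc in H.
      destruct (IH _ _ H) as (a' & c' & Hin & P1 & P2).
      exists a', (x :: c'). repeat split; auto.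
      * apply in_flat_map. exists (a', c'). simpl. auto.
      * now apply Permutation_cons_app.
Qed.

Lemma lsub_app_iff k s b ts u :
  lsub k (RApp s b) ts u <-> exists p, In p (splits ts) /\
    exists s' b', lsub k s (fst p) s' /\ lsub_bag k b (snd p) b' /\ u = RApp s' b'.
Proof.
  split.
  - intros H. inversion H as [| | | |? ? ? ? ts1 ts2 s' b' Pm Hs Hb]; subst.
    destruct (perm_splits _ _ _ Pm) as (a & c & Hin & P1 & P2).
    exists (a, c). split; auto. exists s', b'. simpl. repeat split; auto.
    + eapply lsub_perm; eauto. now symmetry.
    + eapply lsub_bag_perm; eauto. now symmetry.
  - intros ([a c] & Hin & s' & b' & H1 & H2 & ->).
    econstructor; eauto. now apply splits_perm.
Qed.

Lemma lsub_bag_cons_iff k x b ts r :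
  lsub_bag k (x :: b) ts r <-> exists p, In p (splits ts) /\
    exists x' b', lsub k x (fst p) x' /\ lsub_bag k b (snd p) b' /\ r = x' :: b'.
Proof.
  split.
  - intros H. inversion H as [|? ? ? ? ts1 ts2 x' b' Pm Hx Hb]; subst.
    destruct (perm_splits _ _ _ Pm) as (a & c & Hin & P1 & P2).
    exists (a, c). split; auto. exists x', b'. simpl. repeat split; auto.
    + eapply lsub_perm; eauto. now symmetry.
    + eapply lsub_bag_perm; eauto. now symmetry.
  - intros ([a c] & Hin & x' & b' & H1 & H2 & ->).
    econstructor; eauto. now apply splits_perm.
Qed.

Lemma lsub_var_enumerable k n ts : enumerable (lsub k (RVar n) ts).
Proof.
  exists (match ts with
          | [] => if n <? k then [RVar n] else if k <? n then [RVar (n - 1)] else []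
          | [t] => if n =? k then [rlift 0 k t] else []
          | _ => [] end).
  intros u. split.
  - destruct ts as [|t [|t' ts]].
    + destruct_ltb; simpl; try tauto; intros [<-|[]]; constructor; lia.
    + destruct (n =? k) eqn:E; simpl; [|intros []]. intros [<-|[]].
      apply Nat.eqb_eq in E; subst. constructor.
    + intros [].
  - intros H. inversion H; subst.
    + rewrite Nat.eqb_refl. now left.
    + destruct_ltb; try lia. now left.
    + destruct_ltb; try lia. now left.
Qed.

Lemma lsub_enumerable s : forall k ts, enumerable (lsub k s ts).
Proof.
  induction s as [n|s IHs|s b IHs IHb] using rterm_ind'; intros k ts.
  - apply lsub_var_enumerable.
  - destruct (IHs (S k) ts) as [L HL]. exists (map RLam L). intros u.
    rewrite in_map_iff. split.
    + intros (x & <- & Hx). constructor. now apply HL.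
    + intros Hl. inversion Hl; subst. eexists. split; eauto. now apply HL.
  - assert (Hb : forall ts, enumerable (lsub_bag k b ts)).
    { clear IHs ts. induction IHb as [|x b Hx _ IH]; intros ts.
      - exists (match ts with [] => [[]] | _ => [] end). intros r.
        destruct ts; simpl; split.
        + intros [<-|[]]. constructor.
        + intros Hl; inversion Hl; auto.
        + intros [].
        + intros Hl; inversion Hl.
      - destruct (enumerable_union (fun p r => exists x' b', lsub k x (fst p) x' /\
              lsub_bag k b (snd p) b' /\ r = x' :: b') (splits ts)) as [L HL].
        { intros p _. now apply enumerable_image2. }
        exists L. intros r. now rewrite HL, lsub_bag_cons_iff. }
    destruct (enumerable_union (fun p u => exists s' b', lsub k s (fst p) s' /\
              lsub_bag k b (snd p) b' /\ u = RApp s' b') (splits ts)) as [L HL].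
    { intros p _. now apply enumerable_image2. }
    exists L. intros u. now rewrite HL, lsub_app_iff.
Qed.

(** * Resource reduction of a single summand *)

(** [rred1 s u]: [u] is a summand of a one-step reduct of [s]. *)
Inductive rred1 : rterm -> rterm -> Prop :=
| r1_beta s b u : lsub 0 s b u -> rred1 (RApp (RLam s) b) u
| r1_lam s u : rred1 s u -> rred1 (RLam s) (RLam u)
| r1_appl s b u : rred1 s u -> rred1 (RApp s b) (RApp u b)
| r1_appr s b1 t b2 u : rred1 t u -> rred1 (RApp s (b1 ++ t :: b2)) (RApp s (b1 ++ u :: b2)).

Definition rred : rterm -> rterm -> Prop := clos_refl_trans rterm rred1.

Lemma rstep_rred1 s U : rstep s U -> forall u, In u U -> rred1 s u.
Proof.
  induction 1; intros u Hu; try (apply in_map_iff in Hu as (x & <- & Hx)); constructor; auto.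
  now apply H.
Qed.

Lemma rred1_rstep s u : rred1 s u -> exists U, rstep s U /\ In u U.
Proof.
  induction 1 as [s b u Hu|s u _ (U & HU & Hin)|s b u _ (U & HU & Hin)
                 |s b1 t b2 u _ (U & HU & Hin)].
  - destruct (lsub_enumerable s 0 b) as [L HL]. exists L. split.
    + constructor. intros; now rewrite HL.
    + now apply HL.
  - exists (map RLam U). split; [now constructor|now apply in_map].
  - exists (map (fun s' => RApp s' b) U). split; [now constructor|].
    now apply in_map with (f := fun s' => RApp s' b).
  - exists (map (fun t' => RApp s (b1 ++ t' :: b2)) U). split; [now constructor|].
    now apply in_map with (f := fun t' => RApp s (b1 ++ t' :: b2)).
Qed.

Lemma rhas_redex_rstep s : rhas_redex s -> exists U, rstep s U.
Proof.
  induction 1 as [s b|s _ [U HU]|s b _ [U HU]|s t b Hin _ [U HU]].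
  - destruct (lsub_enumerable s 0 b) as [L HL]. exists L. constructor. intros; now rewrite HL.
  - exists (map RLam U). now apply rs_lam.
  - exists (map (fun s' => RApp s' b) U). now apply rs_appl.
  - apply in_split in Hin as (b1 & b2 & ->).
    exists (map (fun t' => RApp s (b1 ++ t' :: b2)) U). now apply rs_appr.
Qed.

Lemma rred1_rsize s u : rred1 s u -> rsize u < rsize s.
Proof.
  induction 1 as [s b u Hu| | |s b1 t b2 u _ IH]; simpl; try lia.
  - apply lsub_lsub_bag_size in Hu. unfold bsize in Hu. lia.
  - fold (bsize (b1 ++ t :: b2)) (bsize (b1 ++ u :: b2)).
    rewrite !bsize_app. unfold bsize; simpl. lia.
Qed.

Lemma rred1_rlift s u : rred1 s u -> forall c d, rred1 (rlift c d s) (rlift c d u).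
Proof.
  induction 1 as [s b u Hu| | |]; intros c d; simpl.
  - constructor. pose proof (proj1 lsub_lsub_bag_lift _ _ _ _ Hu c d) as H. simpl in H.
    now rewrite !Nat.add_0_r in H.
  - now constructor.
  - now constructor.
  - rewrite !map_app. simpl. now constructor.
Qed.

Lemma rred_rlift s u c d : rred s u -> rred (rlift c d s) (rlift c d u).
Proof. induction 1; [apply rt_step, rred1_rlift|apply rt_refl|eapply rt_trans]; eauto. Qed.

Lemma rred_lam x y : rred x y -> rred (RLam x) (RLam y).
Proof. induction 1; [apply rt_step; constructor|apply rt_refl|eapply rt_trans]; eauto. Qed.

Lemma rred_appl x y b : rred x y -> rred (RApp x b) (RApp y b).
Proof. induction 1; [apply rt_step; constructor|apply rt_refl|eapply rt_trans]; eauto. Qed.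

Lemma rred_appr s b1 b2 t u :
  rred t u -> rred (RApp s (b1 ++ t :: b2)) (RApp s (b1 ++ u :: b2)).
Proof. induction 1; [apply rt_step; constructor|apply rt_refl|eapply rt_trans]; eauto. Qed.

Lemma rred_bag s b b' : Forall2 rred b b' -> rred (RApp s b) (RApp s b').
Proof.
  intros H. enough (Hpre : forall pre, rred (RApp s (pre ++ b)) (RApp s (pre ++ b'))) by exact (Hpre []).
  induction H as [|t u b b' Htu _ IH]; intros pre; [apply rt_refl|].
  eapply rt_trans; [apply rred_appr with (u := u), Htu|].
  specialize (IH (pre ++ [u])). now rewrite <- !app_assoc in IH.
Qed.

Lemma rred_app x y b b' : rred x y -> Forall2 rred b b' -> rred (RApp x b) (RApp y b').
Proof. intros. eapply rt_trans; [apply rred_appl|apply rred_bag]; eauto. Qed.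

Lemma Forall2_rred_refl b : Forall2 rred b b.
Proof. induction b; constructor; auto. apply rt_refl. Qed.

Lemma Forall2_rred_trans a b c : Forall2 rred a b -> Forall2 rred b c -> Forall2 rred a c.
Proof.
  intros H. revert c. induction H; intros c H'; inversion H'; subst; constructor; auto.
  eapply rt_trans; eauto.
Qed.

Lemma Forall2_rred_one b1 b2 t u : rred t u -> Forall2 rred (b1 ++ t :: b2) (b1 ++ u :: b2).
Proof.
  intros. apply Forall2_app; [apply Forall2_rred_refl|constructor; auto].
  apply Forall2_rred_refl.
Qed.

(** * Reduction of sums and normal forms *)

Definition sum_red : list rterm -> list rterm -> Prop := clos_refl_trans _ sum_step.

Lemma sum_step_aux_refl A : sum_step_aux A A false.
Proof. induction A; constructor; auto. Qed.

Lemma sum_step_aux_app A A' b1 B B' b2 : sum_step_aux A A' b1 ->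
  sum_step_aux B B' b2 -> sum_step_aux (A ++ B) (A' ++ B') (orb b1 b2).
Proof.
  induction 1; intros; simpl; auto.
  - apply ssa_keep. auto.
  - rewrite <- app_assoc. apply ssa_red with (b := orb b b2); auto.
Qed.

Lemma sum_red_app A A' B B' : sum_red A A' -> sum_red B B' -> sum_red (A ++ B) (A' ++ B').
Proof.
  intros H1 H2. apply rt_trans with (A' ++ B).
  - clear H2. induction H1; [|apply rt_refl|eapply rt_trans; eauto].
    apply rt_step. exact (sum_step_aux_app _ _ true B B false H (sum_step_aux_refl B)).
  - clear H1. induction H2; [|apply rt_refl|eapply rt_trans; eauto].
    apply rt_step. exact (sum_step_aux_app A' A' false _ _ true (sum_step_aux_refl A') H).
Qed.

Lemma sum_red_cons a a' B B' : sum_red [a] a' -> sum_red B B' -> sum_red (a :: B) (a' ++ B').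
Proof. apply (sum_red_app [a]). Qed.

Lemma rstep_sum_step s U : rstep s U -> sum_step [s] U.
Proof. intros H. rewrite <- (app_nil_r U). econstructor; eauto. constructor. Qed.

Lemma rred_sum_red s u : rred s u -> exists T, sum_red [s] T /\ In u T.
Proof.
  intros H. apply clos_rt_rt1n in H.
  induction H as [x|x y z Hxy _ (T & HT & Hu)].
  - exists [x]. split; [apply rt_refl|now left].
  - apply rred1_rstep in Hxy as (U & HU & Hy). apply in_split in Hy as (U1 & U2 & ->).
    exists (U1 ++ T ++ U2). split.
    + eapply rt_trans; [apply rt_step, rstep_sum_step; eauto|].
      apply sum_red_app; [apply rt_refl|]. apply sum_red_cons; [auto|apply rt_refl].
    + apply in_or_app. right. apply in_or_app. now left.
Qed.

Lemma sum_step_aux_rred S T b :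
  sum_step_aux S T b -> forall u, In u T -> exists x, In x S /\ rred x u.
Proof.
  induction 1 as [|s S T b _ IH|s U S T b Hs _ IH]; simpl; intros u Hu.
  - destruct Hu.
  - destruct Hu as [<-|Hu]; [exists s; split; auto; apply rt_refl|].
    destruct (IH u Hu) as (x & Hx & Hr). eauto.
  - apply in_app_or in Hu as [Hu|Hu].
    + exists s. split; auto. apply rt_step. eapply rstep_rred1; eauto.
    + destruct (IH u Hu) as (x & Hx & Hr). eauto.
Qed.

Lemma sum_red_rred S T : sum_red S T -> forall u, In u T -> exists x, In x S /\ rred x u.
Proof.
  induction 1 as [S T H|S|S T U _ IH1 _ IH2]; intros u Hu.
  - eapply sum_step_aux_rred; eauto.
  - exists u. split; auto. apply rt_refl.
  - destruct (IH2 u Hu) as (y & Hy & Hr). destruct (IH1 y Hy) as (x & Hx & Hr').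
    exists x. split; auto. eapply rt_trans; eauto.
Qed.

Lemma is_nf_r_rred s T t : is_nf_r s T -> In t T -> rred s t /\ ~ rhas_redex t.
Proof.
  intros [H1 H2] Ht. split; auto.
  now destruct (sum_red_rred _ _ H1 t Ht) as (x & [<-|[]] & Hr).
Qed.

Lemma sum_red_normalising_list U :
  (forall u, In u U -> exists T, sum_red [u] T /\ sum_normal T) ->
  exists T, sum_red U T /\ sum_normal T.
Proof.
  induction U as [|a U IH]; intros H.
  - exists []. split; [apply rt_refl|intros t []].
  - destruct (H a (or_introl eq_refl)) as (Ta & Ha & Na).
    destruct IH as (T & HT & NT); [intros; apply H; now right|].
    exists (Ta ++ T). split; [now apply sum_red_cons|].
    intros t Ht. apply in_app_or in Ht as [Ht|Ht]; auto.
Qed.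

Lemma sum_red_normalising s : exists T, sum_red [s] T /\ sum_normal T.
Proof.
  remember (rsize s) as n. revert s Heqn.
  induction n as [n IH] using lt_wf_ind; intros s ->.
  destruct (classic (rhas_redex s)) as [Hr|Hr].
  - destruct (rhas_redex_rstep s Hr) as [U HU].
    destruct (sum_red_normalising_list U) as (T & HT & NT).
    { intros u Hu. eapply IH; [|reflexivity]. eapply rred1_rsize, rstep_rred1; eauto. }
    exists T. split; auto. eapply rt_trans; [apply rt_step, rstep_sum_step|]; eauto.
  - exists [s]. split; [apply rt_refl|]. now intros t [<-|[]].
Qed.

Lemma rred_is_nf_r s t : rred s t -> ~ rhas_redex t -> exists T, is_nf_r s T /\ In t T.
Proof.
  intros H Nt. destruct (rred_sum_red _ _ H) as (T0 & HT0 & Ht).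
  apply in_split in Ht as (A & B & ->).
  destruct (sum_red_normalising_list A) as (A' & HA & NA); [intros; apply sum_red_normalising|].
  destruct (sum_red_normalising_list B) as (B' & HB & NB); [intros; apply sum_red_normalising|].
  exists (A' ++ t :: B'). split; [split|].
  - eapply rt_trans; [eauto|]. apply sum_red_app; auto.
    apply (sum_red_cons t [t]); [apply rt_refl|auto].
  - intros x Hx. apply in_app_or in Hx as [Hx|[<-|Hx]]; auto.
  - apply in_or_app. right. now left.
Qed.

(** * Reduction commutes with linear substitution *)

Lemma Forall2_rred_perm b b1 c1 : Forall2 rred b b1 -> Permutation b1 c1 ->
  exists c, Permutation b c /\ Forall2 rred c c1.
Proof.
  intros F P. apply Forall2_flip in F.
  destruct (Permutation_Forall2 P F) as (c & Pc & Fc).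
  exists c. split; auto. now apply Forall2_flip in Fc.
Qed.

Lemma lsub_lsub_bag_rred_arg :
  (forall k p b' u1, lsub k p b' u1 -> forall b, Forall2 rred b b' ->
     exists u, lsub k p b u /\ rred u u1) /\
  (forall k c b' c1, lsub_bag k c b' c1 -> forall b, Forall2 rred b b' ->
     exists c0, lsub_bag k c b c0 /\ Forall2 rred c0 c1).
Proof.
  apply lsub_lsub_bag_ind.
  - intros k t b H. inversion H as [|x ? ? ? Hx Hnil]; subst. inversion Hnil; subst.
    exists (rlift 0 k x). split; [constructor|now apply rred_rlift].
  - intros k n Hn b H. inversion H; subst.
    exists (RVar n). split; [now constructor|apply rt_refl].
  - intros k n Hn b H. inversion H; subst.
    exists (RVar (n - 1)). split; [now constructor|apply rt_refl].
  - intros k s ts s' _ IH b H. destruct (IH _ H) as (u & Hu & Hr).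
    exists (RLam u). split; [now constructor|now apply rred_lam].
  - intros k s c ts ts1 ts2 s' c' Pm _ IHs _ IHc b H.
    destruct (Forall2_rred_perm _ _ _ H Pm) as (b0 & P0 & F0).
    apply Forall2_app_inv_r in F0 as (b1 & b2 & F1 & F2 & ->).
    destruct (IHs _ F1) as (u & Hu & Hr). destruct (IHc _ F2) as (c0 & Hc & Fr).
    exists (RApp u c0). split; [econstructor; eauto|now apply rred_app].
  - intros k b H. inversion H; subst. exists []. split; constructor.
  - intros k x c ts ts1 ts2 x' c' Pm _ IHx _ IHc b H.
    destruct (Forall2_rred_perm _ _ _ H Pm) as (b0 & P0 & F0).
    apply Forall2_app_inv_r in F0 as (b1 & b2 & F1 & F2 & ->).
    destruct (IHx _ F1) as (u & Hu & Hr). destruct (IHc _ F2) as (c0 & Hc & Fr).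
    exists (u :: c0). split; [econstructor; eauto|now constructor].
Qed.

Lemma lsub_rred_arg k p b b' u1 : Forall2 rred b b' -> lsub k p b' u1 ->
  exists u, lsub k p b u /\ rred u u1.
Proof. intros; eapply (proj1 lsub_lsub_bag_rred_arg); eauto. Qed.

Lemma rred1_lsub p p' : rred1 p p' -> forall k b u1, lsub k p' b u1 ->
  exists u, lsub k p b u /\ rred u u1.
Proof.
  induction 1 as [s b u Hu|s u _ IH|s b u _ IH|s b1 t b2 u _ IH]; intros k b0 u1 H.
  - destruct (proj1 lsub_lsub_bag_comm 0 s b u Hu k b0 u1 H)
      as (c1 & c2 & q' & e' & P & A & B & C).
    exists (RApp (RLam q') e'). split.
    + econstructor; eauto. now constructor.
    + apply rt_step. now constructor.
  - inversion H as [| | |? ? ? u' Hu'|]; subst.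
    destruct (IH _ _ _ Hu') as (u0 & Hu & Hr).
    exists (RLam u0). split; [now constructor|now apply rred_lam].
  - inversion H as [| | | |? ? ? ? ts1 ts2 s' b' Pm Hs Hb]; subst.
    destruct (IH _ _ _ Hs) as (u0 & Hu & Hr).
    exists (RApp u0 b'). split; [econstructor; eauto|now apply rred_appl].
  - inversion H as [| | | |? ? ? ? ts1 ts2 s' b' Pm Hs Hb]; subst.
    destruct (lsub_bag_app_inv _ _ _ _ _ Hb) as (tA & tB & rA & rB & PA & BA & BB & ->).
    inversion BB as [|? ? ? ? tu tB' u' rB' Pu Hu' HrB]; subst.
    destruct (IH _ _ _ Hu') as (u0 & Hu & Hr).
    exists (RApp s' (rA ++ u0 :: rB')). split.
    + econstructor; eauto. eapply lsub_bag_perm; [|symmetry; eauto].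
      apply lsub_bag_app; auto. econstructor; eauto.
    + now apply rred_appr.
Qed.

(** * Head reduction of resource terms *)

Fixpoint rlams (n : nat) (s : rterm) : rterm :=
  match n with 0 => s | S n => RLam (rlams n s) end.

Fixpoint rapps (s : rterm) (bs : list (list rterm)) : rterm :=
  match bs with [] => s | b :: bs => RApp (rapps s bs) b end.

Lemma rred_rlams_rapps n bs X Y :
  rred X Y -> rred (rlams n (rapps X bs)) (rlams n (rapps Y bs)).
Proof.
  intros H. induction n; simpl; [|now apply rred_lam].
  induction bs; simpl; auto. now apply rred_appl.
Qed.

Lemma rhas_redex_rlams_rapps n bs X : rhas_redex X -> rhas_redex (rlams n (rapps X bs)).
Proof.
  intros H. induction n; simpl; [|now constructor].
  induction bs; simpl; auto. now constructor.
Qed.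

Definition bags_rred : list (list rterm) -> list (list rterm) -> Prop := Forall2 (Forall2 rred).

Lemma bags_rred_refl bs : bags_rred bs bs.
Proof. induction bs; constructor; auto. apply Forall2_rred_refl. Qed.

Lemma bags_rred_trans a b c : bags_rred a b -> bags_rred b c -> bags_rred a c.
Proof.
  unfold bags_rred. intros H. revert c. induction H; intros c H'; inversion H'; subst; constructor; auto.
  eapply Forall2_rred_trans; eauto.
Qed.

Lemma rred_rlams_rapps_bags n X bs bs' :
  bags_rred bs bs' -> rred (rlams n (rapps X bs)) (rlams n (rapps X bs')).
Proof.
  intros H. induction n; simpl; [|now apply rred_lam].
  induction H; simpl; [apply rt_refl|]. now apply rred_app.
Qed.

(** A step from a head context either reduces inside the head [X] (which is not an
    abstraction, so is never consumed) or inside the argument bags. *)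
Lemma rred1_rlams_rapps_inv n bs X y : (forall q, X <> RLam q) ->
  rred1 (rlams n (rapps X bs)) y ->
  (exists X', rred1 X X' /\ y = rlams n (rapps X' bs)) \/
  (exists bs', y = rlams n (rapps X bs') /\ bags_rred bs bs').
Proof.
  intros NL. revert y. induction n as [|n IHn]; simpl; intros y H.
  - revert y H. induction bs as [|b bs IH]; simpl; intros y H; [left; eauto|].
    inversion H as [p ? ? ? E| |? ? ? Hs|? b1 t b2 u Htu]; subst.
    + exfalso. destruct bs; simpl in *; [eapply NL; eauto|discriminate].
    + destruct (IH _ Hs) as [(X' & H1 & ->)|(bs' & -> & Hr)]; [left; eauto|].
      right. exists (b :: bs'). split; auto. constructor; auto. apply Forall2_rred_refl.
    + right. exists ((b1 ++ u :: b2) :: bs). split; auto. constructor.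
      * now apply Forall2_rred_one, rt_step.
      * apply bags_rred_refl.
  - inversion H as [|? ? Hs| |]; subst.
    destruct (IHn _ Hs) as [(X' & H2 & ->)|(bs' & -> & Hr)]; [left; eauto|right; eauto].
Qed.

(** Reducing a term with a head redex to a normal form can start with the head redex:
    reductions elsewhere are postponed past it by [rred1_lsub] and [lsub_rred_arg]. *)
Lemma rred_head_redex_first n bs p b t :
  rred (rlams n (rapps (RApp (RLam p) b) bs)) t -> ~ rhas_redex t ->
  exists u, lsub 0 p b u /\ rred (rlams n (rapps u bs)) t.
Proof.
  intros H Nt. apply clos_rt_rt1n in H.
  remember (rlams n (rapps (RApp (RLam p) b) bs)) as x eqn:Ex.
  revert bs p b Ex. induction H as [x|x y t Hxy Hyt IH]; intros bs p b ->.
  - exfalso. apply Nt, rhas_redex_rlams_rapps. constructor.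
  - destruct (rred1_rlams_rapps_inv n bs (RApp (RLam p) b) y)
      as [(X' & HX & ->)|(bs' & -> & Hr)]; auto; [intros q; discriminate| |].
    + inversion HX as [? ? ? Hl|? ? Hp|? ? ? Hp|? b1 t0 b2 u0 Ht0]; subst.
      * exists X'. split; auto. now apply clos_rt1n_rt.
      * inversion Hp as [|? p' Hpp| |]; subst.
        destruct (IH Nt bs p' b eq_refl) as (u1 & Hu1 & Hr1).
        destruct (rred1_lsub _ _ Hpp 0 b u1 Hu1) as (u0 & Hu0 & Hr0).
        exists u0. split; auto. eapply rt_trans; [apply rred_rlams_rapps|]; eauto.
      * destruct (IH Nt bs p (b1 ++ u0 :: b2) eq_refl) as (u1 & Hu1 & Hr1).
        destruct (lsub_rred_arg 0 p (b1 ++ t0 :: b2) (b1 ++ u0 :: b2) u1)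
          as (u & Hu & Hr); auto; [now apply Forall2_rred_one, rt_step|].
        exists u. split; auto. eapply rt_trans; [apply rred_rlams_rapps|]; eauto.
    + destruct (IH Nt bs' p b eq_refl) as (u1 & Hu1 & Hr1).
      exists u1. split; auto. eapply rt_trans; [apply rred_rlams_rapps_bags|]; eauto.
Qed.

Lemma rred_rlams_rapps_var n z bs t : rred (rlams n (rapps (RVar z) bs)) t ->
  exists bs', t = rlams n (rapps (RVar z) bs') /\ bags_rred bs bs'.
Proof.
  intros H. apply clos_rt_rt1n in H.
  remember (rlams n (rapps (RVar z) bs)) as x eqn:Ex. revert bs Ex.
  induction H as [x|x y t Hxy _ IH]; intros bs ->.
  - exists bs. split; auto. apply bags_rred_refl.
  - destruct (rred1_rlams_rapps_inv n bs (RVar z) y) as [(X' & HX & _)|(bs1 & -> & Hr1)];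
      auto; [discriminate|inversion HX|].
    destruct (IH bs1 eq_refl) as (bs2 & -> & Hr2).
    exists bs2. split; auto. eapply bags_rred_trans; eauto.
Qed.

(** * Taylor approximation, lifting and substitution *)

Definition term_unfold (t : term) : term :=
  match t with Var n => Var n | Lam t => Lam t | App a b => App a b end.

Lemma term_unfold_eq t : t = term_unfold t.
Proof. now destruct t. Qed.

Lemma lift_var c d n : lift c d (Var n) = Var (if n <? c then n else n + d).
Proof. now rewrite (term_unfold_eq (lift c d (Var n))). Qed.

Lemma lift_lam c d t : lift c d (Lam t) = Lam (lift (S c) d t).
Proof. now rewrite (term_unfold_eq (lift c d (Lam t))). Qed.

Lemma lift_app c d t u : lift c d (App t u) = App (lift c d t) (lift c d u).
Proof. now rewrite (term_unfold_eq (lift c d (App t u))). Qed.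

Lemma subst_var k n u : subst k (Var n) u =
  if n <? k then Var n else if n =? k then lift 0 k u else Var (n - 1).
Proof.
  rewrite (term_unfold_eq (subst k (Var n) u)). simpl.
  destruct (n <? k); auto. destruct (n =? k); auto. symmetry; apply term_unfold_eq.
Qed.

Lemma subst_lam k t u : subst k (Lam t) u = Lam (subst (S k) t u).
Proof. now rewrite (term_unfold_eq (subst k (Lam t) u)). Qed.

Lemma subst_app k t1 t2 u : subst k (App t1 t2) u = App (subst k t1 u) (subst k t2 u).
Proof. now rewrite (term_unfold_eq (subst k (App t1 t2) u)). Qed.

Lemma bisim_refl : forall t, bisim t t.
Proof. cofix CH. intros [] ; constructor; apply CH. Qed.

Lemma taylor_bisim t : forall X Y, bisim X Y -> taylor t X -> taylor t Y.
Proof.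
  induction t as [n|t IHt|t b IHt IHb] using rterm_ind'; intros X Y HB HT;
    inversion HT; subst; inversion HB; subst; constructor; eauto.
  intros x Hx. rewrite Forall_forall in IHb. eauto.
Qed.

Lemma bisim_sym : forall X Y, bisim X Y -> bisim Y X.
Proof. cofix CH. intros X Y []; constructor; apply CH; assumption. Qed.

Lemma taylor_lift t U : taylor t U -> forall c d, taylor (rlift c d t) (lift c d U).
Proof.
  induction 1 as [n|s M _ IH|s b M N _ IHs _ IHb]; intros c d; simpl.
  - rewrite lift_var. constructor.
  - rewrite lift_lam. constructor. auto.
  - rewrite lift_app. constructor; auto.
    intros x Hx. apply in_map_iff in Hx as (y & <- & Hy). auto.
Qed.

Lemma taylor_lift_inv t : forall c d U, taylor t (lift c d U) ->
  exists t0, taylor t0 U /\ t = rlift c d t0.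
Proof.
  induction t as [n|t IHt|t b IHt IHb] using rterm_ind'; intros c d U HT;
    destruct U as [m|U|U1 U2];
    rewrite ?lift_var, ?lift_lam, ?lift_app in HT; inversion HT as [|? ? Ht|? ? ? ? Ht Hb];
    subst.
  - exists (RVar m). split; [constructor|reflexivity].
  - destruct (IHt _ _ _ Ht) as (t0 & Ht0 & ->). exists (RLam t0). split; [now constructor|auto].
  - destruct (IHt _ _ _ Ht) as (t0 & Ht0 & ->).
    assert (Hb0 : exists b0, (forall x, In x b0 -> taylor x U2) /\ b = map (rlift c d) b0).
    { clear HT IHt Ht. induction IHb as [|y b Hy _ IH].
      - exists []. split; auto. intros x [].
      - destruct (Hy c d U2) as (y0 & Hy0 & ->); [apply Hb; now left|].
        destruct IH as (b0 & Hb0 & ->); [intros; apply Hb; now right|].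
        exists (y0 :: b0). split; auto. intros z [<-|Hz]; auto. }
    destruct Hb0 as (b0 & Hb0 & ->). exists (RApp t0 b0). split; [now constructor|auto].
Qed.

Lemma taylor_lsub_lsub_bag :
  (forall k p b u, lsub k p b u -> forall T U, taylor p T ->
     (forall x, In x b -> taylor x U) -> taylor u (subst k T U)) /\
  (forall k l b r, lsub_bag k l b r -> forall T U, (forall y, In y l -> taylor y T) ->
     (forall x, In x b -> taylor x U) -> forall y, In y r -> taylor y (subst k T U)).
Proof.
  apply lsub_lsub_bag_ind.
  - intros k t T U HT Ht. inversion HT; subst.
    rewrite subst_var, Nat.ltb_irrefl, Nat.eqb_refl. apply taylor_lift, Ht. now left.
  - intros k n Hn T U HT _. inversion HT; subst. rewrite subst_var.
    destruct_ltb; try lia. constructor.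
  - intros k n Hn T U HT _. inversion HT; subst. rewrite subst_var.
    destruct_ltb; try lia. replace (n =? k) with false by (symmetry; apply Nat.eqb_neq; lia).
    constructor.
  - intros k s ts s' _ IH T U HT Hts. inversion HT; subst. rewrite subst_lam.
    constructor. auto.
  - intros k s c ts ts1 ts2 s' c' Pm _ IHs _ IHc T U HT Hts.
    inversion HT as [| |? ? M N Hs Hc]; subst. rewrite subst_app.
    assert (Hts' : forall x, In x (ts1 ++ ts2) -> taylor x U)
      by (intros x Hx; apply Hts; eapply Permutation_in; [symmetry|]; eauto).
    constructor; [apply IHs|eapply IHc]; auto; intros x Hx; apply Hts'; apply in_or_app; auto.
  - intros k T U _ _ y [].
  - intros k x c ts ts1 ts2 x' c' Pm _ IHx _ IHc T U Hxc Hts y Hy.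
    assert (Hts' : forall x, In x (ts1 ++ ts2) -> taylor x U)
      by (intros z Hz; apply Hts; eapply Permutation_in; [symmetry|]; eauto).
    destruct Hy as [<-|Hy].
    + apply IHx; [apply Hxc; now left|]. intros z Hz; apply Hts'; apply in_or_app; auto.
    + eapply IHc; eauto; [intros; apply Hxc; now right|].
      intros z Hz; apply Hts'; apply in_or_app; auto.
Qed.

Lemma taylor_lsub k p b u T U : lsub k p b u -> taylor p T ->
  (forall x, In x b -> taylor x U) -> taylor u (subst k T U).
Proof. intros; eapply (proj1 taylor_lsub_lsub_bag); eauto. Qed.

Lemma taylor_subst_var_inv u k m U : taylor u (subst k (Var m) U) ->
  exists p b, taylor p (Var m) /\ (forall x, In x b -> taylor x U) /\ lsub k p b u.
Proof.
  rewrite subst_var. intros HT. destruct (m <? k) eqn:E1; [|destruct (m =? k) eqn:E2].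
  - apply Nat.ltb_lt in E1. inversion HT; subst.
    exists (RVar m), []. repeat split; [constructor|intros x []|now constructor].
  - apply Nat.eqb_eq in E2. subst. apply taylor_lift_inv in HT as (t0 & Ht0 & ->).
    exists (RVar k), [t0]. repeat split; [constructor|intros x [<-|[]]; auto|constructor].
  - apply Nat.ltb_ge in E1. apply Nat.eqb_neq in E2. inversion HT; subst.
    exists (RVar m), []. repeat split; [constructor|intros x []|constructor; lia].
Qed.

Lemma taylor_subst_inv u : forall k T U, taylor u (subst k T U) ->
  exists p b, taylor p T /\ (forall x, In x b -> taylor x U) /\ lsub k p b u.
Proof.
  induction u as [n|u IHu|u c IHu IHc] using rterm_ind'; intros k T U HT;
    (destruct T as [m|T|T1 T2]; [now apply taylor_subst_var_inv|..]);
    rewrite ?subst_lam, ?subst_app in HT; inversion HT as [|? ? Hu|? ? ? ? Hu Hc]; subst.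
  - destruct (IHu _ _ _ Hu) as (p & b & Hp & Hb & Hl).
    exists (RLam p), b. repeat split; auto; now constructor.
  - destruct (IHu _ _ _ Hu) as (p & b & Hp & Hb & Hl).
    assert (Hbag : exists pc bc, (forall y, In y pc -> taylor y T2) /\
                     (forall x, In x bc -> taylor x U) /\ lsub_bag k pc bc c).
    { clear HT IHu Hu Hp Hb Hl. induction IHc as [|y c Hy _ IH].
      - exists [], []. repeat split; [intros x []|intros x []|constructor].
      - destruct (Hy k T2 U) as (py & by_ & Hy1 & Hy2 & Hy3); [apply Hc; now left|].
        destruct IH as (pc & bc & Hc1 & Hc2 & Hc3); [intros; apply Hc; now right|].
        exists (py :: pc), (by_ ++ bc). repeat split.
        + intros z [<-|Hz]; auto.
        + intros x Hx; apply in_app_or in Hx as [Hx|Hx]; auto.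
        + econstructor; eauto. }
    destruct Hbag as (pc & bc & Hc1 & Hc2 & Hc3).
    exists (RApp p pc), (b ++ bc). repeat split.
    + now constructor.
    + intros x Hx; apply in_app_or in Hx as [Hx|Hx]; auto.
    + econstructor; eauto.
Qed.

(** * Head reduction of infinite terms *)

Fixpoint lams (n : nat) (M : term) : term :=
  match n with 0 => M | S n => Lam (lams n M) end.

Fixpoint apps (M : term) (Qs : list term) : term :=
  match Qs with [] => M | Q :: Qs => App (apps M Qs) Q end.

Definition head_red (M M' : term) : Prop := exists n Qs P Q,
  M = lams n (apps (App (Lam P) Q) Qs) /\ M' = lams n (apps (subst 0 P Q) Qs).

Definition head_red_star : term -> term -> Prop := clos_refl_trans_1n term head_red.

Definition hnf (n z : nat) (Qs : list term) : term := lams n (apps (Var z) Qs).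

Definition is_hnf (H : term) : Prop := exists n z Qs, H = hnf n z Qs.

Definition head_atom (X : term) : Prop :=
  (exists z, X = Var z) \/ (exists P Q, X = App (Lam P) Q).

Lemma apps_not_lam X Qs P : head_atom X -> apps X Qs <> Lam P.
Proof. intros [(z & ->)|(P' & Q & ->)]; destruct Qs; discriminate. Qed.

Lemma apps_inj X X' Qs Qs' : head_atom X -> head_atom X' ->
  apps X Qs = apps X' Qs' -> Qs = Qs' /\ X = X'.
Proof.
  intros HX HX'. revert Qs'. induction Qs as [|Q Qs IH]; intros [|Q' Qs'] E; simpl in E.
  - auto.
  - exfalso. destruct HX as [(z & ->)|(P & Q & ->)]; [discriminate|].
    injection E as E _. eapply apps_not_lam; [exact HX'|]. symmetry; exact E.
  - exfalso. destruct HX' as [(z & ->)|(P & Q' & ->)]; [discriminate|].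
    injection E as E _. eapply apps_not_lam; [exact HX|]. exact E.
  - injection E as E ->. now destruct (IH _ E) as [-> ->].
Qed.

Lemma lams_apps_inj X X' n n' Qs Qs' : head_atom X -> head_atom X' ->
  lams n (apps X Qs) = lams n' (apps X' Qs') -> n = n' /\ Qs = Qs' /\ X = X'.
Proof.
  intros HX HX'. revert n'. induction n as [|n IH]; intros [|n'] E; simpl in E.
  - destruct (apps_inj _ _ _ _ HX HX' E). auto.
  - exfalso. exact (apps_not_lam _ _ _ HX E).
  - exfalso. exact (apps_not_lam _ _ _ HX' (eq_sym E)).
  - injection E as E. now destruct (IH _ E) as (-> & -> & ->).
Qed.

Lemma head_red_det M M1 M2 : head_red M M1 -> head_red M M2 -> M1 = M2.
Proof.
  intros (n & Qs & P & Q & -> & ->) (n' & Qs' & P' & Q' & E & ->).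
  apply lams_apps_inj in E as (-> & -> & E); [|right; eauto|right; eauto].
  now injection E as -> ->.
Qed.

Lemma is_hnf_head_normal H H' : is_hnf H -> ~ head_red H H'.
Proof.
  intros (n & z & Qs & ->) (n' & Qs' & P & Q & E & _).
  apply lams_apps_inj in E as (_ & _ & E); [discriminate|left; eauto|right; eauto].
Qed.

Lemma head_red_star_hnf_unique M H1 H2 : head_red_star M H1 -> is_hnf H1 ->
  head_red_star M H2 -> is_hnf H2 -> H1 = H2.
Proof.
  intros S1. revert H2. induction S1 as [M|M M1 H1 R1 _ IH]; intros H2 N1 S2 N2;
    inversion S2 as [|? M2 R2 S2']; subst; auto.
  - exfalso. exact (is_hnf_head_normal _ _ N1 R2).
  - exfalso. exact (is_hnf_head_normal _ _ N2 R1).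
  - rewrite (head_red_det _ _ _ R1 R2) in IH. auto.
Qed.

Lemma head_red_beta_step M M' : head_red M M' -> beta_step M M'.
Proof.
  intros (n & Qs & P & Q & -> & ->). induction n; simpl; [|now constructor].
  induction Qs; simpl; constructor; auto. apply bisim_refl.
Qed.

Lemma head_red_star_beta_star M H : head_red_star M H -> beta_star M H.
Proof.
  intros HR. exists H. split; [|apply bisim_refl].
  induction HR; [apply rt_refl|eapply rt_trans; eauto]. now apply rt_step, head_red_beta_step.
Qed.

Definition bags_taylor (bs : list (list rterm)) (Qs : list term) : Prop :=
  Forall2 (fun b Q => forall x, In x b -> taylor x Q) bs Qs.

Lemma taylor_rlams_rapps n bs Qs X X' : taylor X X' -> bags_taylor bs Qs ->
  taylor (rlams n (rapps X bs)) (lams n (apps X' Qs)).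
Proof.
  intros HX HB. induction n; simpl; [|now constructor].
  induction HB; simpl; auto. now constructor.
Qed.

Lemma taylor_rlams_rapps_inv n bs X M : taylor (rlams n (rapps X bs)) M ->
  exists X' Qs, M = lams n (apps X' Qs) /\ taylor X X' /\ bags_taylor bs Qs.
Proof.
  revert M. induction n as [|n IHn]; simpl; intros M HT.
  - revert M HT. induction bs as [|b bs IH]; simpl; intros M HT.
    + exists M, []. repeat split; auto. constructor.
    + inversion HT as [| |? ? M' N Hs Hb]; subst.
      destruct (IH _ Hs) as (X' & Qs & -> & HX & HB).
      exists X', (N :: Qs). repeat split; auto. now constructor.
  - inversion HT as [|? M' Hs|]; subst. destruct (IHn _ Hs) as (X' & Qs & -> & HX & HB).
    exists X', Qs. auto.
Qed.

Lemma taylor_hnf_inv n z Qs s : taylor s (hnf n z Qs) ->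
  exists bs, s = rlams n (rapps (RVar z) bs) /\ bags_taylor bs Qs.
Proof.
  unfold hnf. revert s. induction n as [|n IHn]; simpl; intros s HT.
  - revert s HT. induction Qs as [|Q Qs IH]; simpl; intros s HT.
    + inversion HT; subst. exists []. split; auto. constructor.
    + inversion HT as [| |s' b ? ? Hs Hb]; subst.
      destruct (IH _ Hs) as (bs & -> & G). exists (b :: bs). split; auto. now constructor.
  - inversion HT as [|s' ? Hs|]; subst. destruct (IHn _ Hs) as (bs & -> & G). eauto.
Qed.

Lemma rterm_head_shape s : (exists n z bs, s = rlams n (rapps (RVar z) bs)) \/
  (exists n bs p b, s = rlams n (rapps (RApp (RLam p) b) bs)).
Proof.
  induction s as [z|s IHs|s b IHs _] using rterm_ind'.
  - left. now exists 0, z, [].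
  - destruct IHs as [(n & z & bs & ->)|(n & bs & p & b & ->)].
    + left. now exists (S n), z, bs.
    + right. now exists (S n), bs, p, b.
  - destruct IHs as [(n & z & bs & ->)|(n & bs & p & b0 & ->)]; destruct n as [|n].
    + left. now exists 0, z, (b :: bs).
    + right. now exists 0, [], (rlams n (rapps (RVar z) bs)), b.
    + right. now exists 0, (b :: bs), p, b0.
    + right. now exists 0, [], (rlams n (rapps (RApp (RLam p) b0) bs)), b.
Qed.

Lemma rsize_rlams_rapps n bs X Y : rsize X < rsize Y ->
  rsize (rlams n (rapps X bs)) < rsize (rlams n (rapps Y bs)).
Proof. intros H. induction n; simpl; [|lia]. induction bs; simpl; auto. lia. Qed.

(** If an approximant of [M] reduces to a normal term, then [M] has a head normal form:
    the head redex of the approximant is fired first (by [rred_head_redex_first]),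
    which strictly decreases its size and corresponds to a head step on [M]. *)
Lemma taylor_rred_nf_head_normalising s M t : taylor s M -> rred s t -> ~ rhas_redex t ->
  exists n z Qs s', head_red_star M (hnf n z Qs) /\ taylor s' (hnf n z Qs) /\ rred s' t.
Proof.
  remember (rsize s) as m eqn:Em. revert s M Em.
  induction m as [m IH] using lt_wf_ind; intros s M -> HT Hr Nt.
  destruct (rterm_head_shape s) as [(n & z & bs & ->)|(n & bs & p & b & ->)];
    destruct (taylor_rlams_rapps_inv _ _ _ _ HT) as (X' & Qs & -> & HX & HB).
  - inversion HX; subst. exists n, z, Qs, (rlams n (rapps (RVar z) bs)).
    repeat split; [constructor|exact HT|exact Hr].
  - inversion HX as [| |? ? M' N Hp Hb]; subst. inversion Hp as [|? P Hp'|]; subst.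
    destruct (rred_head_redex_first _ _ _ _ _ Hr Nt) as (u & Hu & Hru).
    assert (Su : rsize (rlams n (rapps u bs)) < rsize (rlams n (rapps (RApp (RLam p) b) bs)))
      by (apply rsize_rlams_rapps, rred1_rsize; now constructor).
    destruct (IH _ Su (rlams n (rapps u bs)) (lams n (apps (subst 0 P N) Qs)) eq_refl)
      as (n' & z' & Qs' & s' & K1 & K2 & K3); auto.
    { apply taylor_rlams_rapps; auto. eapply taylor_lsub; eauto. }
    exists n', z', Qs', s'. repeat split; auto.
    econstructor; [|exact K1]. now exists n, Qs, P, N.
Qed.

(** * From positive approximants to a normal form *)

Definition pos_approximable (M : term) : Prop := forall d, exists s t,
  taylor s M /\ rred s t /\ ~ rhas_redex t /\ dpos d t.

Definition hnf_of (h : nat * nat * list term) : term := let '(n, z, Qs) := h in hnf n z Qs.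

(** A head normal form of [M] (unique by [head_red_star_hnf_unique]); the junk value
    [(0, 0, [])] when [M] has none. *)
Definition hnf_choice (M : term) : nat * nat * list term :=
  epsilon (inhabits (0, 0, [])) (fun h => head_red_star M (hnf_of h)).

CoFixpoint bohm (h : nat * nat * list term) : term :=
  match h with
  | (S n, z, Qs) => Lam (bohm (n, z, Qs))
  | (0, z, []) => Var z
  | (0, z, Q :: Qs) => App (bohm (0, z, Qs)) (bohm (hnf_choice Q))
  end.

Definition bohm_tree (M : term) : term := bohm (hnf_choice M).

Lemma bohm_S n z Qs : bohm (S n, z, Qs) = Lam (bohm (n, z, Qs)).
Proof. now rewrite (term_unfold_eq (bohm (S n, z, Qs))). Qed.

Lemma bohm_nil z : bohm (0, z, []) = Var z.
Proof. now rewrite (term_unfold_eq (bohm (0, z, []))). Qed.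

Lemma bohm_cons z Q Qs : bohm (0, z, Q :: Qs) = App (bohm (0, z, Qs)) (bohm_tree Q).
Proof. now rewrite (term_unfold_eq (bohm (0, z, Q :: Qs))). Qed.

Lemma pos_approximable_head_red M : pos_approximable M -> head_red_star M (hnf_of (hnf_choice M)).
Proof.
  intros G. destruct (G 0) as (s & t & Hs & Hr & Nt & _).
  destruct (taylor_rred_nf_head_normalising s M t) as (n & z & Qs & _ & H & _); auto.
  apply (epsilon_spec (inhabits (0, 0, [])) (fun h => head_red_star M (hnf_of h))).
  now exists (n, z, Qs).
Qed.

Lemma dpos_rlams_rapps_var_inv d n z bs : dpos (S d) (rlams n (rapps (RVar z) bs)) ->
  forall b, In b bs -> b <> [] /\ forall x, In x b -> dpos d x.
Proof.
  induction n as [|n IHn]; simpl; intros H; [|inversion H; auto].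
  induction bs as [|b0 bs IH]; simpl; intros b Hb; [destruct Hb|].
  inversion H; subst. destruct Hb as [<-|Hb]; auto.
Qed.

Lemma rlams_rapps_var_normal_inv n z bs : ~ rhas_redex (rlams n (rapps (RVar z) bs)) ->
  forall b, In b bs -> forall x, In x b -> ~ rhas_redex x.
Proof.
  intros H b Hb x Hx Rx. apply H. clear H. induction n; simpl; [|now constructor].
  induction bs as [|b0 bs IH]; simpl; [destruct Hb|].
  destruct Hb as [<-|Hb]; [eapply rr_appr|apply rr_appl]; eauto.
Qed.

(** Each argument [Q] of a head normal form receives a nonempty bag of approximants; a
    reduct of that bag keeps a member satisfying [P] as soon as all its members do. *)
Lemma bags_taylor_pick (P : rterm -> Prop) bs Qs bs' : bags_taylor bs Qs -> bags_rred bs bs' ->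
  (forall b, In b bs' -> b <> [] /\ forall x, In x b -> P x) ->
  forall Q, In Q Qs -> exists y x, taylor y Q /\ rred y x /\ P x.
Proof.
  intros HT. revert bs'. induction HT as [|b Q0 bs Qs Hb _ IH];
    intros bs' HR HP Q HQ; [destruct HQ|].
  inversion HR as [|? b' ? bs'' Hbb' Hr]; subst. destruct HQ as [<-|HQ].
  - destruct (HP b' (or_introl eq_refl)) as [Hne HPx].
    destruct b' as [|x0 b']; [congruence|].
    inversion Hbb' as [|y ? ? ? Hyx]; subst.
    exists y, x0. repeat split; [apply Hb; now left|exact Hyx|apply HPx; now left].
  - eapply IH; eauto. intros; apply HP; now right.
Qed.

Lemma pos_approximable_args M : pos_approximable M ->
  forall Q, In Q (snd (hnf_choice M)) -> pos_approximable Q.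
Proof.
  intros G Q HQ d. destruct (G (S d)) as (s & t & Hs & Hr & Nt & Dt).
  destruct (taylor_rred_nf_head_normalising s M t) as (n & z & Qs & s' & H1 & H3 & H4); auto.
  pose proof (pos_approximable_head_red M G) as HM.
  destruct (hnf_choice M) as [[n0 z0] Qs0]. simpl in HQ, HM.
  assert (E : hnf n z Qs = hnf n0 z0 Qs0)
    by (eapply head_red_star_hnf_unique; eauto; eexists _, _, _; reflexivity).
  rewrite E in H3.
  destruct (taylor_hnf_inv _ _ _ _ H3) as (bs & -> & TB).
  destruct (rred_rlams_rapps_var _ _ _ _ H4) as (bs' & -> & RB).
  destruct (bags_taylor_pick (fun x => ~ rhas_redex x /\ dpos d x) bs Qs0 bs' TB RB)
    with (Q := Q) as (y & x & Hy & Hyx & Nx & Dx); auto.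
  - intros b Hb. destruct (dpos_rlams_rapps_var_inv _ _ _ _ Dt b Hb). split; auto.
    intros x Hx. split; auto. eapply rlams_rapps_var_normal_inv; eauto.
  - now exists y, x.
Qed.

Lemma bohm_layer h : layer001 (fun x => exists h, x = bohm h) (bohm h).
Proof.
  destruct h as [[n z] Qs]. induction n as [|n IHn].
  - induction Qs as [|Q Qs IH]; [rewrite bohm_nil|rewrite bohm_cons]; constructor; auto.
    now exists (hnf_choice Q).
  - rewrite bohm_S. now constructor.
Qed.

Lemma bohm_wf001 h : wf001 (bohm h).
Proof.
  exists (fun x => exists h, x = bohm h). split; [|eauto].
  intros t (h' & ->). apply bohm_layer.
Qed.

Lemma bohm_normal h : beta_normal (bohm h).
Proof.
  intros R. remember (bohm h) as x eqn:E. revert h E.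
  induction R as [t u|t R IH|t u R IH|t u R IH]; intros [[[|n] z] [|Q Qs]] E;
    rewrite ?bohm_nil, ?bohm_cons, ?bohm_S in E; try discriminate.
  - injection E as E _. destruct Qs; rewrite ?bohm_nil, ?bohm_cons in E; discriminate.
  - injection E as E. eauto.
  - injection E as E. eauto.
  - injection E as E _. eauto.
  - injection E as _ E. eauto.
Qed.

Lemma beta_star_refl M : beta_star M M.
Proof. exists M. split; [apply rt_refl|apply bisim_refl]. Qed.

Lemma bohm_inf_layer n z Qs : (forall Q, In Q Qs -> pos_approximable Q) ->
  forall M, beta_star M (hnf n z Qs) ->
  inf_layer (fun a b => pos_approximable a /\ b = bohm_tree a) M (bohm (n, z, Qs)).
Proof.
  unfold hnf. intros HG. induction n as [|n IHn]; intros M HM.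
  - revert M HM. induction Qs as [|Q Qs IH]; intros M HM; simpl in HM.
    + rewrite bohm_nil. now constructor.
    + rewrite bohm_cons. econstructor; [exact HM| |split; auto; apply HG; now left].
      apply IH; [intros; apply HG; now right|apply beta_star_refl].
  - rewrite bohm_S. simpl in HM. econstructor; [exact HM|]. apply IHn, beta_star_refl.
Qed.

(** The Böhm tree is reached corecursively: head-reduce to the head normal form, then
    continue in each argument, which is again positively approximable. *)
Lemma pos_approximable_beta_inf M : pos_approximable M -> beta_inf M (bohm_tree M).
Proof.
  intros G. exists (fun a b => pos_approximable a /\ b = bohm_tree a). split; [|now split].
  intros a b [Ga ->]. unfold bohm_tree.
  pose proof (pos_approximable_head_red a Ga) as Ha.
  pose proof (pos_approximable_args a Ga) as Hargs.
  destruct (hnf_choice a) as [[n z] Qs]. simpl in Ha, Hargs.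
  now apply bohm_inf_layer, head_red_star_beta_star.
Qed.

(** * Approximants of an infinitary reduct *)

Lemma taylor_beta_normal u X : taylor u X -> beta_normal X -> ~ rhas_redex u.
Proof.
  intros HT NX Hr. revert X HT NX.
  induction Hr as [s b|s _ IH|s b _ IH|s t b Hin _ IH]; intros X HT NX;
    inversion HT as [|? M Hs|? ? M N Hs Hb]; subst.
  - inversion Hs; subst. apply NX. constructor.
  - apply (IH M Hs). intros Hr. apply NX. now constructor.
  - apply (IH M Hs). intros Hr. apply NX. now apply hr_appl.
  - apply (IH N (Hb t Hin)). intros Hr. apply NX. now apply hr_appr.
Qed.

(** A 001 term has [d]-positive approximants: along the finite layers every application
    is given a singleton bag, and the depth [d] decreases under argument positions. *)
Lemma wf001_dpos_taylor (P : term -> Prop) : (forall t, P t -> layer001 P t) ->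
  forall d x, P x -> exists t, taylor t x /\ dpos d t.
Proof.
  intros HP d. induction d as [|d IHd]; intros x Px; pose proof (HP x Px) as L; clear Px;
    induction L as [n|x _ (t & Ht & Dt)|x u _ (t & Ht & Dt) Pu].
  - exists (RVar n). split; constructor.
  - exists (RLam t). split; now constructor.
  - exists (RApp t []). split; [now constructor|constructor].
  - exists (RVar n). split; constructor.
  - exists (RLam t). split; now constructor.
  - destruct (IHd u Pu) as (tu & Hu & Du).
    exists (RApp t [tu]). split.
    + constructor; auto. now intros y [<-|[]].
    + constructor; auto; [discriminate|now intros y [<-|[]]].
Qed.

Lemma Forall2_rred_lift (Q : rterm -> Prop) b :
  (forall x, In x b -> exists s, Q s /\ rred s x) ->
  exists sb, Forall2 rred sb b /\ forall y, In y sb -> Q y.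
Proof.
  induction b as [|a b IH]; intros H.
  - exists []. split; auto. intros y [].
  - destruct (H a (or_introl eq_refl)) as (s & Qs & Rs).
    destruct IH as (sb & F & Hs); [intros; apply H; now right|].
    exists (s :: sb). split; [now constructor|]. intros y [<-|Hy]; auto.
Qed.

(** Approximants are pulled back along a beta step, the contracted redex becoming a resource
    redex whose reduct contains the given approximant. *)
Lemma beta_step_taylor_back M M' : beta_step M M' ->
  forall t, taylor t M' -> exists s, taylor s M /\ rred s t.
Proof.
  induction 1 as [P Q V HV|P P' _ IH|P P' Q _ IH|P Q Q' _ IH]; intros t HT.
  - apply (taylor_bisim t _ _ HV), taylor_subst_inv in HT as (p & b & Hp & Hb & Hl).
    exists (RApp (RLam p) b). split; [now repeat constructor|]. now apply rt_step, r1_beta.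
  - inversion HT as [|t0 ? Ht|]; subst. destruct (IH _ Ht) as (s & Hs & Rs).
    exists (RLam s). split; [now constructor|now apply rred_lam].
  - inversion HT as [| |t0 b ? ? Ht Hb]; subst. destruct (IH _ Ht) as (s & Hs & Rs).
    exists (RApp s b). split; [now constructor|now apply rred_appl].
  - inversion HT as [| |s b ? ? Hs Hb]; subst.
    destruct (Forall2_rred_lift (fun y => taylor y Q) b) as (sb & F & Hsb); [auto|].
    exists (RApp s sb). split; [now constructor|now apply rred_bag].
Qed.

Lemma beta_star_taylor_back M X t : beta_star M X -> taylor t X ->
  exists s, taylor s M /\ rred s t.
Proof.
  intros (N & H & B) HT. apply (taylor_bisim t _ _ (bisim_sym _ _ B)) in HT. clear B X.
  revert t HT. induction H as [M N H|M|M N P _ IH1 _ IH2]; intros t HT.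
  - eapply beta_step_taylor_back; eauto.
  - exists t. split; auto. apply rt_refl.
  - destruct (IH2 _ HT) as (s1 & H1 & R1). destruct (IH1 _ H1) as (s0 & G0 & R0).
    exists s0. split; auto. eapply rt_trans; eauto.
Qed.

(** An approximant, being finite, only visits finitely many layers of an infinitary
    derivation: induction on its size. *)
Lemma inf_layer_taylor_back (R : term -> term -> Prop) :
  (forall a b, R a b -> inf_layer R a b) ->
  forall t M N, inf_layer R M N -> taylor t N -> exists s, taylor s M /\ rred s t.
Proof.
  intros HR t. remember (rsize t) as m eqn:Em. revert t Em.
  induction m as [m IHm] using lt_wf_ind; intros t -> M N HL.
  revert t IHm. induction HL as [M x Hx|M P P' HM _ IH|M P Q P' Q' HM _ IH HQ];
    intros t IHm HT.
  - eapply beta_star_taylor_back; eauto.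
  - inversion HT as [|s ? Hs|]; subst.
    destruct (IH s) as (s1 & H1 & R1); [intros; eapply IHm; eauto; simpl; lia|auto|].
    destruct (beta_star_taylor_back M (Lam P) (RLam s1)) as (s0 & G0 & R0);
      [auto|now constructor|].
    exists s0. split; auto. eapply rt_trans; [eauto|now apply rred_lam].
  - inversion HT as [| |s b ? ? Hs Hb]; subst.
    destruct (IH s) as (s1 & H1 & R1); [intros; eapply IHm; eauto; simpl; lia|auto|].
    destruct (Forall2_rred_lift (fun y => taylor y Q) b) as (sb & F & Hsb).
    { intros x Hx. pose proof (rsize_le_bsize x b Hx). unfold bsize in *.
      eapply IHm; [|reflexivity|apply HR, HQ|apply Hb, Hx]. simpl. lia. }
    destruct (beta_star_taylor_back M (App P Q) (RApp s1 sb)) as (s0 & G0 & R0);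
      [auto|now constructor|].
    exists s0. split; auto. eapply rt_trans; [eauto|now apply rred_app].
Qed.

Lemma beta_inf_taylor_back M N t : beta_inf M N -> taylor t N ->
  exists s, taylor s M /\ rred s t.
Proof. intros (R & HR & RMN). eapply inf_layer_taylor_back; eauto. Qed.

Theorem mainTheorem18 (M : term) :
  wf001 M ->
  ((exists N : term, wf001 N /\ beta_normal N /\ beta_inf M N)
   <->
   (forall d : nat, exists s : rterm, taylor s M /\
      exists T : list rterm, is_nf_r s T /\
        exists t : rterm, In t T /\ dpos d t)).
Proof.
  intros _. split.
  - intros (N & (P & HP & PN) & NN & MN) d.
    destruct (wf001_dpos_taylor P HP d N PN) as (t & Ht & Dt).
    destruct (beta_inf_taylor_back M N t MN Ht) as (s & Hs & Rs).
    destruct (rred_is_nf_r s t Rs) as (T & HT & InT); [eapply taylor_beta_normal; eauto|].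
    exists s. split; auto. exists T. split; auto. now exists t.
  - intros H. assert (G : pos_approximable M).
    { intros d. destruct (H d) as (s & Hs & T & HT & t & Ht & Dt).
      destruct (is_nf_r_rred _ _ _ HT Ht). now exists s, t. }
    exists (bohm_tree M). repeat split.
    + apply bohm_wf001.
    + apply bohm_normal.
    + now apply pos_approximable_beta_inf.
Qed.
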